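(* Restrict each worker's strategy set to dropping strategies. Consider any economy $\mathcal{E}$ (as in the context) such that either (1) no market $\mathcal{M}(\theta)$, $\theta\in\Theta$, has a preference cycle, or (2) $\mathcal{E}$ satisfies the SPC*. Then, considering Bayesian Nash equilibria in which firms report truthfully and workers use dropping strategies, $\mathcal{E}$ has a unique BNE outcome, namely the one that yields in each state $\theta$ the unique stable matching (for the true preferences) of $\mathcal{M}(\theta)$.
   Context: Matching market: $\mathcal{M}=(F,W,U)$ with finite firms $F=\{f_i\}_{i\in[m]}$, finite workers $W=\{w_j\}_{j\in[n]}$, utilities $u^f_{ij}$ of firm $f_i$ from worker $w_j$ and $u^w_{ij}$ of worker $w_j$ from firm $f_i$; unmatched utility is $0$; all preferences strict; all pairs mutually acceptable. An economy is $\mathcal{E}=(F,W,\{U(\theta)\}_{\theta\in\Theta},\Theta,\Psi)$ with finite $\Theta$, full-support prior $\Psi$, market $\mathcal{M}(\theta)=(F,W,U(\theta))$ in state $\theta$; workers' utilities are state-independent, firms' may depend on $\theta$. Standing assumption: each $\mathcal{M}(\theta)$ has a unique stable matching. Game: $\theta$ drawn by $\Psi$; firms observe $\theta$; each worker knows only his own preferences; all simultaneously submit rank-ordered lists of acceptable partners; firm-proposing Deferred Acceptance is run on the reports. Firms report truthfully; a BNE is a profile where each worker's reported list maximizes his expected utility under $\Psi$ within his allowed strategy set. The outcome of a BNE is the matching produced in each state. A dropping strategy for a worker declares some (possibly no) firms unacceptable and ranks the remaining firms in their true order. A preference cycle in a market is a sequence of distinct firms $f^1,\dots,f^k$ and distinct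 workers $w^1,\dots,w^k$, $k\ge 2$, such that (indices mod $k$) each $f^t$ prefers $w^t$ to $w^{t-1}$ and each $w^t$ prefers $f^{t+1}$ to $f^t$ (the ''aligned preferences condition'' is the absence of such cycles). Sub-market, top-top match, SPC: a sub-market restricts to $F'\subseteq F$, $W'\subseteq W$; $(f,w)$ is a top-top match of it if each is the other's favorite in it; a market satisfies the SPC if there are orderings $f_1,\dots,f_m$, $w_1,\dots,w_n$ with $(f_i,w_i)$ a top-top match of the sub-market induced by $\{f_j,w_j\}_{j\ge i}$ for each $i\le\min(m,n)$ (order $i$). An economy satisfies the SPC if each $\mathcal{M}(\theta)$ does with possibly state-specific orderings $f_{i|\theta}$, $w_{i|\theta}$; it satisfies the SPC* if moreover, for every $\theta$, $i\le\min(m,n)$ and firm $f$: if $w_{i|\theta}$ strictly prefers $f$ to $f_{i|\theta}$, then for every state $\theta'$ there is $i'<i$ with $f=f_{i'|\theta'}$. *)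

From mathcomp Require Import all_boot all_order all_algebra.
From mathcomp Require Import fingroup perm.
Set Implicit Arguments. Unset Strict Implicit. Unset Printing Implicit Defensive.
Import Order.TTheory GRing.Theory Num.Theory.
Local Open Scope ring_scope.

(* Firms are 'I_m, workers are 'I_n, utilities take values in a real field R.
   uf i j : utility of firm f_i from worker w_j (in a given state);
   uw i j : utility of worker w_j from firm f_i (state independent).
   Being unmatched gives utility 0. *)

Section Market.
Variables (R : realFieldType) (m n : nat).
Variables (uf : 'I_m -> 'I_n -> R) (uw : 'I_m -> 'I_n -> R).

Definition matching := {ffun 'I_n -> option 'I_m}.

Definition is_matching (mu : matching) : Prop :=
  forall (j j' : 'I_n) (i : 'I_m), mu j = Some i -> mu j' = Some i -> j = j'.

Definition worker_util (mu : matching) (j : 'I_n) : R :=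
  if mu j is Some i then uw i j else 0.

Definition firm_util (mu : matching) (i : 'I_m) : R :=
  if [pick j | mu j == Some i] is Some j then uf i j else 0.

Definition stable (mu : matching) : Prop :=
  [/\ is_matching mu,
      (forall i j, mu j = Some i -> 0 <= uf i j /\ 0 <= uw i j)
    & (forall i j, ~ (firm_util mu i < uf i j /\ worker_util mu j < uw i j))].

(* A preference cycle f^1..f^k, w^1..w^k (indices modulo k, 0-based here):
   f^t prefers w^t to w^(t-1), and w^t prefers f^(t+1) to f^t. *)
Definition pref_cycle : Prop :=
  exists (k : nat) (f : 'I_k -> 'I_m) (w : 'I_k -> 'I_n),
    [/\ (2 <= k)%N, injective f, injective w,
        (forall t : 'I_k, uf (f t) (w (ord_pred t)) < uf (f t) (w t))
      & (forall t : 'I_k, uw (f t) (w t) < uw (f (ordS t)) (w t))].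

(* The SPC with orderings given by permutations: position p |-> firm sf p,
   position q |-> worker sw q (0-based positions).  For every common position
   p = q < min(m,n), (sf p, sw q) is a top-top match of the sub-market induced
   by the firms and workers at positions >= p. *)
Definition SPC_with (sf : {perm 'I_m}) (sw : {perm 'I_n}) : Prop :=
  forall (p : 'I_m) (q : 'I_n), val p = val q ->
    (forall q' : 'I_n, (val q < val q')%N -> uf (sf p) (sw q') < uf (sf p) (sw q)) /\
    (forall p' : 'I_m, (val p < val p')%N -> uw (sf p') (sw q) < uw (sf p) (sw q)).

(* Firms report their true full ranking (all workers acceptable); worker j
   uses a dropping strategy: acceptable set acc j, ranked in the true order.
   The state of the algorithm records, for each firm, the set of workers who
   have rejected it. *)

Definition best {T : finType} (A : {set T}) (u : T -> R) : option T :=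
  [pick x in A | [forall y in A, u y <= u x]].

Variable acc : 'I_n -> {set 'I_m}.

Definition DA_propose (rej : 'I_m -> {set 'I_n}) (i : 'I_m) : option 'I_n :=
  best (~: rej i) (uf i).

Definition DA_holder (rej : 'I_m -> {set 'I_n}) (j : 'I_n) : option 'I_m :=
  best [set i in acc j | DA_propose rej i == Some j] (fun i => uw i j).

Definition DA_step (rej : 'I_m -> {set 'I_n}) : 'I_m -> {set 'I_n} :=
  fun i => if DA_propose rej i is Some j then
             (if DA_holder rej j == Some i then rej i else j |: rej i)
           else rej i.

(* Each non-terminal round adds a rejection, so after m*n rounds the
   algorithm has terminated. *)
Definition DA_rejections : 'I_m -> {set 'I_n} :=
  iter (m * n).+1 DA_step (fun _ => set0).

Definition DA : matching := [ffun j => DA_holder DA_rejections j].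

End Market.

Section Economy.
Variables (R : realFieldType) (m n : nat) (Theta : finType).
Variables (uf : Theta -> 'I_m -> 'I_n -> R) (uw : 'I_m -> 'I_n -> R)
          (Psi : Theta -> R).

Definition economy : Prop :=
  [/\ (forall th, 0 < Psi th) /\ \sum_th Psi th = 1,
      (forall th i, injective (uf th i)),
      (forall j, injective (fun i => uw i j)),
      (forall th i j, 0 < uf th i j)                (* all pairs mutually *)
    & (forall i j, 0 < uw i j)].                    (*   acceptable        *)

Definition unique_stable : Prop :=
  forall th, exists mu, stable (uf th) uw mu /\
    forall mu', stable (uf th) uw mu' -> mu' = mu.

Definition no_pref_cycle : Prop := forall th, ~ pref_cycle (uf th) uw.

Definition SPC_star : Prop :=
  exists (sf : Theta -> {perm 'I_m}) (sw : Theta -> {perm 'I_n}),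
    (forall th, SPC_with (uf th) uw (sf th) (sw th)) /\
    (forall th (p : 'I_m) (q : 'I_n) (f : 'I_m), val p = val q ->
       uw (sf th p) (sw th q) < uw f (sw th q) ->
       forall th', exists p' : 'I_m, (val p' < val p)%N /\ f = sf th' p').

(* Strategy profile of workers: dropping strategies, i.e. the set of firms
   each worker declares acceptable (ranked in true order). *)
Definition profile := 'I_n -> {set 'I_m}.

Definition outcome (s : profile) (th : Theta) : matching m n :=
  DA (uf th) uw s.

Definition exp_util (s : profile) (j : 'I_n) : R :=
  \sum_th Psi th * worker_util uw (outcome s th) j.

Definition deviate (s : profile) (j : 'I_n) (A : {set 'I_m}) : profile :=
  fun j' => if j' == j then A else s j'.

Definition BNE (s : profile) : Prop :=
  forall (j : 'I_n) (A : {set 'I_m}), exp_util (deviate s j A) j <= exp_util s j.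

End Economy.

(* The mechanism outcome for reported lists [s] is the firm-optimal matching among those
   stable for [s], and for such matchings firms and workers have opposed interests.  Hence if
   the outcome in some state is blocked by (f, w), worker w strictly gains in that state by
   adding f to his list; the theorem follows once such an addition never hurts w in any
   other state, and truthful reporting can never be improved upon.
   Without preference cycles both facts come from one observation: if w is strictly better
   off in a matching alpha stable for lists a than in a matching beta stable for lists b,
   where a and b agree outside w and a w is contained in b w, then following each
   better-off worker x to the worker holding x's alpha-partner under beta never leaves the
   better-off workers, and the resulting orbit is a preference cycle.
   Under SPC* the equilibrium outcome is pinned down along the serial orders by induction on
   the position: the t-th top-top pair must be matched, for otherwise it blocks, and by SPC*
   every firm w prefers to f sits at an earlier position, where it is already matched to its
   own partner in every state, so adding f cannot cost w anything. *)

From mathcomp Require Import all_boot all_order all_algebra.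
From mathcomp Require Import fingroup perm.
Set Implicit Arguments. Unset Strict Implicit. Unset Printing Implicit Defensive.
Import Order.TTheory GRing.Theory Num.Theory.
Local Open Scope ring_scope.

Lemma bounded_potential_iter (T : Type) (f : T -> T) (P : T -> Prop)
    (potential : T -> nat) (b : nat) x :
  (forall y, P y \/ (potential y < potential (f y))%N) ->
  (forall y, P y -> P (f y)) -> (forall y, (potential y <= b)%N) ->
  P (iter b.+1 f x).
Proof.
move=> grow Pf bounded.
suff /(_ b.+1)[//|] : forall t, P (iter t f x) \/ (t <= potential (iter t f x))%N.
  by move/leq_trans/(_ (bounded _)); rewrite ltnn.
elim=> [|t [Pt|le_t]]; [by right | by left; apply: Pf |].
by case: (grow (iter t f x)) => [Pt|lt_t]; [left; apply: Pf | right; apply: leq_ltn_trans lt_t].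
Qed.

Lemma ltr_weighted_sum (R : numDomainType) (T : finType) (c a b : T -> R) t0 :
  (forall t, 0 < c t) -> (forall t, a t <= b t) -> a t0 < b t0 ->
  \sum_t c t * a t < \sum_t c t * b t.
Proof.
move=> c_gt0 le_ab lt_ab; rewrite (bigD1 t0) // [X in _ < X](bigD1 t0) //=.
apply: ltr_leD; first by rewrite ltr_pM2l.
by apply: ler_sum => t _; rewrite ler_pM2l.
Qed.

Section Best.
Variables (R : realFieldType) (T : finType).

Lemma bestP (A : {set T}) (u : T -> R) x :
  best A u = Some x -> x \in A /\ {in A, forall y, u y <= u x}.
Proof. by rewrite /best; case: pickP => // y /andP[yA /forall_inP ymax] [<-]. Qed.

Lemma best_ge (A : {set T}) (u : T -> R) x :
  x \in A -> exists y, best A u = Some y /\ u x <= u y.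
Proof.
move=> xA; rewrite /best; case: pickP => [y /andP[_ /forall_inP ymax]|none].
  by exists y; split; last exact: ymax.
have [y yA ymax] := arg_maxP u xA.
have /negP[] := none y; rewrite (yA : y \in A) /=.
by apply/forall_inP => z; apply: ymax.
Qed.

End Best.

Section Market.
Variables (R : realFieldType) (m n : nat) (uf uw : 'I_m -> 'I_n -> R).
Hypotheses (uf_gt0 : forall i j, 0 < uf i j) (uw_gt0 : forall i j, 0 < uw i j).
Hypotheses (uf_inj : forall i, injective (uf i)) (uw_inj : forall j, injective (uw^~ j)).

Definition blocking (mu : matching m n) i j : Prop :=
  firm_util uf mu i < uf i j /\ worker_util uw mu j < uw i j.

(* Firms report every worker acceptable, so only the workers' lists [acc] restrict stability. *)
Definition acc_stable (acc : 'I_n -> {set 'I_m}) (mu : matching m n) : Prop :=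
  [/\ is_matching mu, (forall i j, mu j = Some i -> i \in acc j)
    & (forall i j, i \in acc j -> ~ blocking mu i j)].

Lemma stable_acc_stable (mu : matching m n) : stable uf uw mu -> acc_stable (fun=> setT) mu.
Proof. by case=> M _ nonblocking; split => // i j _; [rewrite inE | exact: nonblocking]. Qed.

Lemma acc_stable_stable acc (mu : matching m n) : acc_stable acc mu ->
  (forall i j, i \notin acc j -> ~ blocking mu i j) -> stable uf uw mu.
Proof.
case=> M _ nonblocking nonblocking'; split => //.
  by move=> i j _; rewrite !ltW.
by move=> i j; have [/nonblocking|/nonblocking'] := boolP (i \in acc j).
Qed.

Variant firm_util_spec (mu : matching m n) (i : 'I_m) : R -> Prop :=
  | FirmMatched j of mu j = Some i : firm_util_spec mu i (uf i j)
  | FirmUnmatched of (forall j, mu j != Some i) : firm_util_spec mu i 0.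

Lemma firm_utilP (mu : matching m n) i : firm_util_spec mu i (firm_util uf mu i).
Proof.
rewrite /firm_util; case: pickP => [j /eqP|none]; first exact: FirmMatched.
by apply: FirmUnmatched => j; rewrite none.
Qed.

Lemma firm_util_match (mu : matching m n) i j :
  is_matching mu -> mu j = Some i -> firm_util uf mu i = uf i j.
Proof.
move=> M mu_j; case: firm_utilP => [j' /M/(_ mu_j) -> //|none].
by have := none j; rewrite mu_j eqxx.
Qed.

Lemma firm_util_ge0 (mu : matching m n) i : 0 <= firm_util uf mu i.
Proof. by case: firm_utilP => // j _; rewrite ltW. Qed.

Lemma firm_util_matched (mu : matching m n) i j : firm_util uf mu i = uf i j -> mu j = Some i.
Proof.
case: firm_utilP => [j' mu_j' /uf_inj <- // | _ eq0].
by have := uf_gt0 i j; rewrite -eq0 ltxx.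
Qed.

Lemma firm_util_gt0 (mu : matching m n) i :
  0 < firm_util uf mu i -> exists2 j, mu j = Some i & firm_util uf mu i = uf i j.
Proof. by case: firm_utilP => [j mu_j|]; [exists j | rewrite ltxx]. Qed.

Lemma worker_util_some (mu : matching m n) j i : mu j = Some i -> worker_util uw mu j = uw i j.
Proof. by rewrite /worker_util => ->. Qed.

Lemma worker_util_none (mu : matching m n) j : mu j = None -> worker_util uw mu j = 0.
Proof. by rewrite /worker_util => ->. Qed.

Lemma worker_util_ge0 (mu : matching m n) j : 0 <= worker_util uw mu j.
Proof. by rewrite /worker_util; case: (mu j) => // i; rewrite ltW. Qed.

Lemma worker_util_gt0 (mu : matching m n) j : 0 < worker_util uw mu j -> exists i, mu j = Some i.
Proof. by rewrite /worker_util; case: (mu j) => [i|]; [exists i | rewrite ltxx]. Qed.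

Lemma worker_util_matched (mu : matching m n) j i : worker_util uw mu j = uw i j -> mu j = Some i.
Proof.
rewrite /worker_util; case: (mu j) => [i' /uw_inj -> // | eq0].
by have := uw_gt0 i j; rewrite -eq0 ltxx.
Qed.

Lemma uf_lt_of_le i j j' : j != j' -> uf i j <= uf i j' -> uf i j < uf i j'.
Proof. by move=> neq le; rewrite lt_neqAle (inj_eq (@uf_inj i)) neq le. Qed.

Lemma uw_lt_of_le j i i' : i != i' -> uw i j <= uw i' j -> uw i j < uw i' j.
Proof. by move=> neq le; rewrite lt_neqAle (inj_eq (@uw_inj j)) neq le. Qed.

Lemma opposition_of_interests acc (mu1 mu2 : matching m n) :
  acc_stable acc mu1 -> acc_stable acc mu2 ->
  (forall i, firm_util uf mu2 i <= firm_util uf mu1 i) ->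
  forall j, worker_util uw mu1 j <= worker_util uw mu2 j.
Proof.
move=> [M1 IR1 _] [_ _ nonblocking2] firm_le j; rewrite leNgt; apply/negP => lt2.
have [i mu1_j] := worker_util_gt0 (le_lt_trans (worker_util_ge0 _ _) lt2).
rewrite (worker_util_some mu1_j) in lt2.
apply: (nonblocking2 i j (IR1 _ _ mu1_j)); split => //.
have := firm_le i; rewrite (firm_util_match M1 mu1_j) le_eqVlt.
case/predU1P => [/firm_util_matched mu2_j|//].
by rewrite (worker_util_some mu2_j) ltxx in lt2.
Qed.

Section DeferredAcceptance.
Variable acc : 'I_n -> {set 'I_m}.
Local Notation rejections := ('I_m -> {set 'I_n}).
Local Notation propose := (DA_propose uf).
Local Notation holder := (DA_holder uf uw acc).
Local Notation step := (DA_step uf uw acc).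
Local Notation final := (DA_rejections uf uw acc).

Lemma proposeP (r : rejections) i j :
  propose r i = Some j -> j \notin r i /\ {in ~: r i, forall j', uf i j' <= uf i j}.
Proof. by move/bestP; rewrite inE. Qed.

Lemma propose_ge (r : rejections) i j :
  j \notin r i -> exists j', propose r i = Some j' /\ uf i j <= uf i j'.
Proof. by move=> j_r; apply: best_ge; rewrite inE. Qed.

Lemma holderP (r : rejections) j i : holder r j = Some i ->
  [/\ i \in acc j, propose r i = Some j &
      forall i', i' \in acc j -> propose r i' = Some j -> uw i' j <= uw i j].
Proof.
move/bestP; rewrite inE => -[/andP[i_acc /eqP prop_i] imax].
by split => // i' i'_acc prop_i'; apply: imax; rewrite inE i'_acc prop_i' eqxx.
Qed.

Lemma holder_ge (r : rejections) j i : i \in acc j -> propose r i = Some j ->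
  exists i', holder r j = Some i' /\ uw i j <= uw i' j.
Proof. by move=> i_acc prop_i; apply: best_ge; rewrite inE i_acc prop_i eqxx. Qed.

Lemma step_ext (r r' : rejections) : r =1 r' -> step r =1 step r'.
Proof.
move=> eq_r; have eq_prop i : propose r i = propose r' i by rewrite /DA_propose eq_r.
have eq_hold j : holder r j = holder r' j.
  by rewrite /DA_holder; congr best; apply/setP => i; rewrite !inE eq_prop.
by move=> i; rewrite /DA_step eq_prop eq_r; case: (propose r' i) => // j; rewrite eq_hold.
Qed.

Lemma step_sub (r : rejections) i : r i \subset step r i.
Proof.
by rewrite /DA_step; case: (propose r i) => // j; case: ifP => // _; apply: subsetUr.
Qed.

Lemma step_new (r : rejections) i j : j \in step r i -> j \notin r i ->
  propose r i = Some j /\ holder r j != Some i.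
Proof.
rewrite /DA_step; case: (propose r i) => [j'|]; last by move=> ->.
by case: ifP => [_ -> // | /negbT held]; rewrite in_setU1 => /predU1P[-> | ->].
Qed.

Lemma holder_step (r : rejections) j i : holder r j = Some i ->
  exists i', holder (step r) j = Some i' /\ uw i j <= uw i' j.
Proof.
move=> hold_i; have [i_acc prop_i _] := holderP hold_i.
apply: holder_ge => //; rewrite -prop_i /DA_propose.
by rewrite {1}/DA_step prop_i hold_i eqxx.
Qed.

Definition rejections_justified (r : rejections) := forall i j,
  j \in r i -> i \in acc j -> exists i', holder r j = Some i' /\ uw i j < uw i' j.

Definition rejections_avoid (mu : matching m n) (r : rejections) :=
  forall i j, mu j = Some i -> j \notin r i.

Lemma step_justified r : rejections_justified r -> rejections_justified (step r).
Proof.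
move=> just i j j_step i_acc.
have [i1 [hold_i1 lt_i1]] : exists i1, holder r j = Some i1 /\ uw i j < uw i1 j.
  have [j_r|j_new] := boolP (j \in r i); first exact: just.
  have [prop_i held] := step_new j_step j_new.
  have [i1 [hold_i1 le_i1]] := holder_ge i_acc prop_i.
  exists i1; split => //; apply: uw_lt_of_le le_i1.
  by apply: contraNneq held => ->; rewrite hold_i1.
have [i2 [hold_i2 le_i2]] := holder_step hold_i1.
by exists i2; split => //; apply: lt_le_trans le_i2.
Qed.

Lemma step_avoid (mu : matching m n) r :
  acc_stable acc mu -> rejections_avoid mu r -> rejections_avoid mu (step r).
Proof.
move=> [M IR nonblocking] avoid i j mu_j; apply/negP => j_step.
have [prop_i held] := step_new j_step (avoid _ _ mu_j).
have [i1 [hold_i1 le_i1]] := holder_ge (IR _ _ mu_j) prop_i.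
have neq_i1 : i != i1 by apply: contraNneq held => ->; rewrite hold_i1.
have [i1_acc prop_i1 _] := holderP hold_i1.
apply: (nonblocking i1 j i1_acc); split; last by rewrite (worker_util_some mu_j) uw_lt_of_le.
case: (firm_utilP mu i1) => [j' mu_j'|_]; last exact: uf_gt0.
apply: uf_lt_of_le; last by apply: (proj2 (proposeP prop_i1)); rewrite inE avoid.
by apply: contraNneq neq_i1 => eq_j; move: mu_j'; rewrite eq_j mu_j => -[->].
Qed.

Definition potential (r : rejections) := (\sum_i #|r i|)%N.

Lemma potential_le r : (potential r <= m * n)%N.
Proof.
apply: (@leq_trans (\sum_(i < m) n)); last by rewrite sum_nat_const card_ord.
by apply: leq_sum => i _; rewrite -[n in (_ <= n)%N]card_ord max_card.
Qed.

Lemma step_potential r : step r =1 r \/ (potential r < potential (step r))%N.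
Proof.
have [/forallP fixed|/forallPn[i neq_i]] := boolP [forall i, step r i == r i].
  by left => i; apply/eqP.
right; rewrite /potential (bigD1 i) //= [X in (_ < X)%N](bigD1 i) //= -addSn.
apply: leq_add; last by apply: leq_sum => k _; apply/subset_leq_card/step_sub.
by apply: proper_card; rewrite properEneq step_sub eq_sym neq_i.
Qed.

Lemma final_fixed : step final =1 final.
Proof.
apply: (@bounded_potential_iter _ step (fun r => step r =1 r) potential).
- exact: step_potential.
- by move=> r; apply: step_ext.
- exact: potential_le.
Qed.

Lemma final_held i j : propose final i = Some j -> holder final j = Some i.
Proof.
move=> prop_i; have [j_final _] := proposeP prop_i.
apply/eqP; apply: contraNT j_final => held.
by rewrite -[final i]final_fixed /DA_step prop_i (negbTE held) setU11.
Qed.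

Lemma final_justified : rejections_justified final.
Proof.
by rewrite /DA_rejections; elim: (m * n).+1 => [i j|k]; [rewrite inE | apply: step_justified].
Qed.

Lemma final_avoid (mu : matching m n) : acc_stable acc mu -> rejections_avoid mu final.
Proof.
move=> stable_mu; rewrite /DA_rejections; elim: (m * n).+1 => [i j _|k].
  by rewrite inE.
exact: step_avoid.
Qed.

Lemma DA_proposal i j : propose final i = Some j -> DA uf uw acc j = Some i.
Proof. by rewrite ffunE; apply: final_held. Qed.

Lemma DA_match : is_matching (DA uf uw acc).
Proof.
move=> j j' i; rewrite !ffunE => /holderP[_ prop_j _] /holderP[_ prop_j' _].
by move: prop_j; rewrite prop_j' => -[].
Qed.

Lemma DA_acc_stable : acc_stable acc (DA uf uw acc).
Proof.
split; [exact: DA_match | by move=> i j; rewrite ffunE => /holderP[] |].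
move=> i j i_acc [firm_lt worker_lt].
have [j_final|j_open] := boolP (j \in final i).
  have [i' [hold_i' lt_i']] := final_justified j_final i_acc.
  have DA_j : DA uf uw acc j = Some i' by rewrite ffunE.
  by move: worker_lt; rewrite (worker_util_some DA_j) ltNge ltW.
have [j' [prop_i le_j']] := propose_ge j_open.
by move: firm_lt; rewrite (firm_util_match DA_match (DA_proposal prop_i)) ltNge le_j'.
Qed.

Lemma DA_firm_optimal (mu : matching m n) : acc_stable acc mu ->
  forall i, firm_util uf mu i <= firm_util uf (DA uf uw acc) i.
Proof.
move=> stable_mu i; case: (firm_utilP mu i) => [j mu_j|_]; last exact: firm_util_ge0.
have [j' [prop_i le_j']] := propose_ge (final_avoid stable_mu mu_j).
by rewrite (firm_util_match DA_match (DA_proposal prop_i)).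
Qed.

End DeferredAcceptance.

Section BetterOffCycle.
Variables (acc_a acc_b : 'I_n -> {set 'I_m}) (alpha beta : matching m n) (w : 'I_n).
Hypotheses (alpha_stable : acc_stable acc_a alpha) (beta_stable : acc_stable acc_b beta).
Hypothesis acc_ab : forall j, acc_a j \subset acc_b j.
Hypothesis acc_ba : forall j, j != w -> acc_b j \subset acc_a j.

Let better_off := [pred x | worker_util uw beta x < worker_util uw alpha x].
Hypothesis better_off_w : w \in better_off.

Let next x := odflt x [pick y | beta y == alpha x].

Lemma better_off_matched x : x \in better_off -> exists g, alpha x = Some g.
Proof. by rewrite inE => /(le_lt_trans (worker_util_ge0 _ _)) /worker_util_gt0. Qed.

Lemma nextP x g : x \in better_off -> alpha x = Some g ->
  [/\ beta (next x) = Some g, next x \in better_off & uf g x < uf g (next x)].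
Proof.
have [Ma IRa nonblocking_a] := alpha_stable; have [Mb IRb nonblocking_b] := beta_stable.
rewrite inE => better_x alpha_x.
have g_acc_b : g \in acc_b x by apply/(subsetP (acc_ab x))/IRa.
have le_g : uf g x <= firm_util uf beta g.
  rewrite leNgt; apply/negP => lt_g; apply: (nonblocking_b _ _ g_acc_b); split => //.
  by rewrite -(worker_util_some alpha_x).
have [y beta_y fu_y] := firm_util_gt0 (lt_le_trans (uf_gt0 g x) le_g).
have -> : next x = y.
  rewrite /next; case: pickP => [y' /eqP|/(_ y)]; rewrite alpha_x; last by rewrite beta_y eqxx.
  by move=> beta_y'; apply: Mb beta_y' beta_y.
have neq_xy : x != y.
  apply/eqP => eq_xy; move: better_x.
  by rewrite (worker_util_some alpha_x) eq_xy (worker_util_some beta_y) ltxx.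
have lt_xy : uf g x < uf g y by apply: uf_lt_of_le; rewrite -?fu_y.
split => //; rewrite inE; have [-> // | neq_yw] := eqVneq y w.
have g_acc_a : g \in acc_a y by apply/(subsetP (acc_ba neq_yw))/IRb.
have le_y : uw g y <= worker_util uw alpha y.
  rewrite leNgt; apply/negP => lt_y; apply: (nonblocking_a _ _ g_acc_a); split => //.
  by rewrite (firm_util_match Ma alpha_x).
rewrite (worker_util_some beta_y) lt_neqAle le_y andbT.
apply/eqP => /esym/worker_util_matched alpha_y.
by move: neq_xy; rewrite (Ma _ _ _ alpha_x alpha_y) eqxx.
Qed.

Lemma next_inj : {in better_off &, injective next}.
Proof.
move=> x y better_x better_y eq_next; have [Ma _ _] := alpha_stable.
have [g alpha_x] := better_off_matched better_x.
have [h alpha_y] := better_off_matched better_y.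
have [beta_x _ _] := nextP better_x alpha_x; have [beta_y _ _] := nextP better_y alpha_y.
by apply: Ma alpha_x _; move: beta_y; rewrite -eq_next beta_x => -[->].
Qed.

Lemma better_off_pref_cycle : pref_cycle uf uw.
Proof.
have next_better : {homo next : x / x \in better_off}.
  by move=> x better_x; have [g /(nextP better_x)[]] := better_off_matched better_x.
pose k := fingraph.order next w; pose xs t := iter t next w.
have xs_better t : xs t \in better_off by apply: iter_in.
have xs_k : xs k = w := iter_order_in next_better next_inj better_off_w.
have xs_inj : injective (fun t : 'I_k => xs t).
  move=> t t' eq_xs; apply: val_inj => /=.
  rewrite -(findex_iter (ltn_ord t)) -(findex_iter (ltn_ord t')).
  exact: (congr1 (findex next w) eq_xs).
have xsS (t : 'I_k) : xs (ordS t) = next (xs t).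
  rewrite /xs /= -iterS; have [lt_tk|le_kt] := ltnP t.+1 k; first by rewrite modn_small.
  have eq_tk : t.+1 = k by apply/anti_leq; rewrite le_kt ltn_ord.
  by rewrite eq_tk modnn.
have [g0 _] := better_off_matched better_off_w.
pose fs (t : 'I_k) := odflt g0 (alpha (xs (ord_pred t))).
have fsP (t : 'I_k) : [/\ alpha (xs (ord_pred t)) = Some (fs t), beta (xs t) = Some (fs t)
    & uf (fs t) (xs (ord_pred t)) < uf (fs t) (xs t)].
  have [g alpha_g] := better_off_matched (xs_better (ord_pred t)).
  have xs_t : xs t = next (xs (ord_pred t)) by rewrite -xsS ord_predK.
  by rewrite /fs alpha_g xs_t; have [] := nextP (xs_better _) alpha_g.
have k_gt1 : (1 < k)%N.
  rewrite ltn_neqAle fingraph.order_gt0 andbT; apply/eqP => k1.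
  have [g alpha_w] := better_off_matched better_off_w.
  have [beta_w _ _] := nextP better_off_w alpha_w.
  have next_w : next w = w by rewrite -[RHS]xs_k -k1.
  rewrite next_w in beta_w; move: better_off_w.
  by rewrite inE (worker_util_some alpha_w) (worker_util_some beta_w) ltxx.
exists k, fs, (fun t => xs t); split => // [t t' eq_fs | t | t].
- have [Mb _ _] := beta_stable; apply: xs_inj.
  by have [_ beta_t _] := fsP t; have [_ beta_t' _] := fsP t'; apply: Mb beta_t _; rewrite eq_fs.
- by have [] := fsP t.
- have [_ beta_t _] := fsP t; have [alpha_t _ _] := fsP (ordS t); rewrite ordSK in alpha_t.
  by have := xs_better t; rewrite inE (worker_util_some beta_t) (worker_util_some alpha_t).
Qed.

End BetterOffCycle.

Lemma acyclic_worker_util_le acc_a acc_b (alpha beta : matching m n) w :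
  ~ pref_cycle uf uw -> acc_stable acc_a alpha -> acc_stable acc_b beta ->
  (forall j, acc_a j \subset acc_b j) -> (forall j, j != w -> acc_b j \subset acc_a j) ->
  worker_util uw alpha w <= worker_util uw beta w.
Proof.
move=> acyclic *; rewrite leNgt; apply/negP => better_off; apply: acyclic.
exact: (@better_off_pref_cycle acc_a acc_b alpha beta w).
Qed.

Lemma deviate_self (s : profile m n) j A : deviate s j A j = A.
Proof. by rewrite /deviate eqxx. Qed.

Lemma deviate_other (s : profile m n) j A j' : j' != j -> deviate s j A j' = s j'.
Proof. by rewrite /deviate => /negbTE ->. Qed.

Section Deviation.
Variables (s : 'I_n -> {set 'I_m}) (w : 'I_n) (f : 'I_m).
Let s' := deviate s w (f |: s w).

Lemma deviate_sub j : s j \subset s' j.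
Proof.
rewrite /s' /deviate; case: eqP => [->|_]; [exact: subsetUr | exact: subxx].
Qed.

Lemma acc_stable_undeviate (mu : matching m n) :
  acc_stable s' mu -> mu w != Some f -> acc_stable s mu.
Proof.
case=> M IR nonblocking mu_w; split => [//|i j mu_j|i j i_acc].
  have := IR _ _ mu_j; rewrite /s' /deviate; case: eqP => [eq_j|_ i_s //].
  rewrite eq_j in_setU1 => /predU1P[eq_i|//].
  by move: mu_w; rewrite -eq_j mu_j eq_i eqxx.
exact: (nonblocking _ _ (subsetP (deviate_sub j) _ i_acc)).
Qed.

Variables (nu nu' : matching m n).
Hypotheses (nu_stable : acc_stable s nu) (nu'_stable : acc_stable s' nu').
Hypothesis nu_optimal :
  forall mu, acc_stable s mu -> forall i, firm_util uf mu i <= firm_util uf nu i.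

Lemma deviate_harm : worker_util uw nu w <= worker_util uw nu' w \/ nu' w = Some f.
Proof.
have [|nu'_w] := eqVneq (nu' w) (Some f); [by right | left].
have stable' := acc_stable_undeviate nu'_stable nu'_w.
exact: opposition_of_interests nu_stable stable' (nu_optimal stable') w.
Qed.

Lemma deviate_gain : blocking nu f w -> worker_util uw nu w < worker_util uw nu' w.
Proof.
move=> [firm_lt worker_lt].
have [nu'_w|nu'_w] := eqVneq (nu' w) (Some f); first by rewrite (worker_util_some nu'_w).
have le_f := nu_optimal (acc_stable_undeviate nu'_stable nu'_w) f.
have [_ _ nonblocking'] := nu'_stable.
apply: lt_le_trans worker_lt _; rewrite leNgt; apply/negP => lt_f.
apply: (nonblocking' f w); first by rewrite /s' deviate_self setU11.
by split => //; apply: le_lt_trans le_f firm_lt.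
Qed.

Lemma deviate_acyclic_no_harm : ~ pref_cycle uf uw ->
  worker_util uw nu w <= worker_util uw nu' w.
Proof.
move=> acyclic; apply: (acyclic_worker_util_le acyclic nu_stable nu'_stable) => j.
  exact: deviate_sub.
by move=> neq_j; rewrite /s' deviate_other.
Qed.

End Deviation.

Section SerialPreferenceCondition.
Variables (sf : {perm 'I_m}) (sw : {perm 'I_n}).
Hypothesis spc : SPC_with uf uw sf sw.

(* [mu] agrees with the serial (top-top) matching on the first [t] positions. *)
Definition diag_matched (mu : matching m n) t := forall (p : 'I_m) (q : 'I_n),
  val p = val q -> (val p < t)%N -> mu (sw q) = Some (sf p).

Lemma diag_matched_all (mu : matching m n) t : diag_matched mu m -> diag_matched mu t.
Proof. by move=> diag p q pq _; apply: diag pq (ltn_ord p). Qed.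

Lemma spc_worker_le (p p' : 'I_m) (q : 'I_n) : val p = val q -> (val p <= val p')%N ->
  uw (sf p') (sw q) <= uw (sf p) (sw q).
Proof.
move=> pq; rewrite leq_eqVlt => /predU1P[/val_inj <- // | lt_p].
exact/ltW/(proj2 (spc pq)).
Qed.

Lemma diag_matched_firm_late (mu : matching m n) (q : 'I_n) i : is_matching mu ->
  diag_matched mu (val q) -> mu (sw q) = Some i -> (val q <= val ((sf^-1)%g i))%N.
Proof.
move=> M diag mu_q; rewrite leqNgt; apply/negP => lt_q.
have lt_pn : (val ((sf^-1)%g i) < n)%N := ltn_trans lt_q (ltn_ord q).
have := diag _ (Ordinal lt_pn) erefl lt_q; rewrite permKV => /M/(_ mu_q)/perm_inj eq_q.
by move: lt_q; rewrite -eq_q ltnn.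
Qed.

Lemma diag_matched_worker_late (mu : matching m n) (p : 'I_m) j : is_matching mu ->
  diag_matched mu (val p) -> mu j = Some (sf p) -> (val p <= val ((sw^-1)%g j))%N.
Proof.
move=> M diag mu_j; rewrite leqNgt; apply/negP => lt_p.
have lt_qm : (val ((sw^-1)%g j) < m)%N := ltn_trans lt_p (ltn_ord p).
have := diag (Ordinal lt_qm) _ erefl lt_p; rewrite permKV mu_j => -[/perm_inj eq_p].
by move: lt_p; rewrite eq_p ltnn.
Qed.

Lemma diag_matched_unmatched (mu : matching m n) (q : 'I_n) : is_matching mu ->
  diag_matched mu (val q) -> (m <= val q)%N -> mu (sw q) = None.
Proof.
move=> M diag le_mq; case mu_q: (mu (sw q)) => [i|//].
by have := leq_trans le_mq (diag_matched_firm_late M diag mu_q); rewrite leqNgt ltn_ord.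
Qed.

Lemma diag_matched_eq (mu mu' : matching m n) : is_matching mu -> is_matching mu' ->
  diag_matched mu m -> diag_matched mu' m -> mu = mu'.
Proof.
move=> M M' diag diag'; apply/ffunP => j; rewrite -(permKV sw j).
set q := (sw^-1)%g j; have [lt_qm|le_mq] := ltnP (val q) m.
  by rewrite (diag (Ordinal lt_qm) q erefl lt_qm) (diag' (Ordinal lt_qm) q erefl lt_qm).
have diag_q : diag_matched mu (val q) := diag_matched_all diag.
have diag'_q : diag_matched mu' (val q) := diag_matched_all diag'.
by rewrite !diag_matched_unmatched.
Qed.

Lemma diag_blocking (mu : matching m n) (p : 'I_m) (q : 'I_n) : is_matching mu ->
  val p = val q -> diag_matched mu (val p) -> mu (sw q) != Some (sf p) ->
  blocking mu (sf p) (sw q).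
Proof.
move=> M pq diag unmatched; split.
  case: (firm_utilP mu (sf p)) => [j mu_j|_]; last exact: uf_gt0.
  have le_pj := diag_matched_worker_late M diag mu_j.
  rewrite -(permKV sw j); apply: (proj1 (spc pq)); rewrite ltn_neqAle -pq le_pj andbT.
  apply: contraNneq unmatched => eq_pj.
  by rewrite (_ : q = (sw^-1)%g j) ?permKV ?mu_j //; apply: val_inj; rewrite -pq.
case mu_q: (mu (sw q)) => [i|]; last by rewrite (worker_util_none mu_q).
have diag_q : diag_matched mu (val q) by rewrite -pq.
have le_qi := diag_matched_firm_late M diag_q mu_q.
rewrite (worker_util_some mu_q) -(permKV sf i); apply: (proj2 (spc pq)).
rewrite ltn_neqAle pq le_qi andbT; apply: contraNneq unmatched => eq_qi.
by rewrite mu_q -(permKV sf i) (_ : (sf^-1)%g i = p) //; apply: val_inj; rewrite /= -eq_qi.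
Qed.

Lemma acc_stable_diag_matched acc (mu : matching m n) t : acc_stable acc mu ->
  (forall (p : 'I_m) (q : 'I_n), val p = val q -> (val p < t)%N -> sf p \in acc (sw q)) ->
  diag_matched mu t.
Proof.
case=> M _ nonblocking; elim: t => [//|t IH] acc_diag.
have diag_t : diag_matched mu t.
  by apply: IH => p q pq lt_p; apply: acc_diag pq (ltnW lt_p).
move=> p q pq; rewrite ltnS leq_eqVlt => /predU1P[eq_pt|]; last exact: diag_t.
have [//|unmatched] := eqVneq (mu (sw q)) (Some (sf p)).
have lt_pt : (val p < t.+1)%N by rewrite eq_pt.
have diag_p : diag_matched mu (val p) by rewrite eq_pt.
by case: (nonblocking _ _ (acc_diag p q pq lt_pt) (diag_blocking M pq diag_p unmatched)).
Qed.

Lemma spc_truthful_best (s' : 'I_n -> {set 'I_m}) w (nu nu' : matching m n) :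
  (forall j, j != w -> s' j = setT) -> acc_stable (fun=> setT) nu -> acc_stable s' nu' ->
  worker_util uw nu' w <= worker_util uw nu w.
Proof.
move=> s'_T nu_stable nu'_stable; have [M' _ _] := nu'_stable.
set q := (sw^-1)%g w; have sw_q : sw q = w by rewrite permKV.
have diag' : diag_matched nu' (val q).
  apply: acc_stable_diag_matched nu'_stable _ => p q' pq' lt_q'.
  rewrite s'_T ?inE // -sw_q (inj_eq perm_inj); apply/eqP => eq_q'.
  by move: lt_q'; rewrite pq' eq_q' ltnn.
have diag : diag_matched nu m.
  by apply: acc_stable_diag_matched nu_stable _ => *; rewrite inE.
rewrite -sw_q; case nu'_w: (nu' (sw q)) => [i|]; last first.
  by rewrite (worker_util_none nu'_w) worker_util_ge0.
have le_qi := diag_matched_firm_late M' diag' nu'_w.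
have lt_qm : (val q < m)%N := leq_ltn_trans le_qi (ltn_ord _).
rewrite (worker_util_some nu'_w) (worker_util_some (diag (Ordinal lt_qm) q erefl lt_qm)).
by rewrite -{1}(permKV sf i); apply: spc_worker_le.
Qed.

Lemma spc_deviate_no_harm s w f t (nu nu' : matching m n) :
  acc_stable s nu -> acc_stable (deviate s w (f |: s w)) nu' ->
  (forall mu, acc_stable s mu -> forall i, firm_util uf mu i <= firm_util uf nu i) ->
  (t <= n)%N -> diag_matched nu t ->
  (forall g, uw f w < uw g w -> exists p : 'I_m, (val p < t)%N /\ g = sf p) ->
  worker_util uw nu w <= worker_util uw nu' w.
Proof.
move=> nu_stable nu'_stable nu_optimal le_tn diag early; have [M IR _] := nu_stable.
have [//|nu'_w] := deviate_harm nu_stable nu'_stable nu_optimal.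
case nu_w: (nu w) => [g|]; last by rewrite (worker_util_none nu_w) worker_util_ge0.
rewrite (worker_util_some nu_w) (worker_util_some nu'_w) leNgt; apply/negP => lt_fg.
have [p [lt_pt eq_g]] := early g lt_fg.
have lt_pn : (val p < n)%N := leq_trans lt_pt le_tn.
have sw_p : sw (Ordinal lt_pn) = w.
  by apply: M (diag p (Ordinal lt_pn) erefl lt_pt) _; rewrite nu_w eq_g.
have diag' : diag_matched nu' (val p).+1.
  apply: acc_stable_diag_matched nu'_stable _ => p' q' pq' le_p'.
  apply/(subsetP (deviate_sub _ _ _ _))/IR/diag => //.
  by rewrite ltnS in le_p'; apply: leq_ltn_trans le_p' lt_pt.
have := diag' p (Ordinal lt_pn) erefl (ltnSn _); rewrite sw_p nu'_w -eq_g => -[eq_f].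
by move: lt_fg; rewrite eq_f ltxx.
Qed.

End SerialPreferenceCondition.

Lemma truthful_best (s' : 'I_n -> {set 'I_m}) w (nu nu' : matching m n) :
  ~ pref_cycle uf uw \/ (exists sf sw, SPC_with uf uw sf sw) ->
  (forall j, j != w -> s' j = setT) -> acc_stable (fun=> setT) nu -> acc_stable s' nu' ->
  worker_util uw nu' w <= worker_util uw nu w.
Proof.
case=> [acyclic|[sf [sw spc]]] s'_T nu_stable nu'_stable; last first.
  exact: (@spc_truthful_best sf sw spc s' w nu nu' s'_T nu_stable nu'_stable).
apply: (acyclic_worker_util_le acyclic nu'_stable nu_stable) => j.
  exact: subsetT.
by move/s'_T ->.
Qed.

End Market.

Section Economy.
Variables (R : realFieldType) (m n : nat) (Theta : finType).
Variables (uf : Theta -> 'I_m -> 'I_n -> R) (uw : 'I_m -> 'I_n -> R) (Psi : Theta -> R).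
Hypothesis Psi_gt0 : forall th, 0 < Psi th.
Hypotheses (uf_gt0 : forall th i j, 0 < uf th i j) (uw_gt0 : forall i j, 0 < uw i j).
Hypotheses (uf_inj : forall th i, injective (uf th i)) (uw_inj : forall j, injective (uw^~ j)).

Lemma outcome_acc_stable th s : acc_stable (uf th) uw s (outcome uf uw s th).
Proof. exact: (DA_acc_stable (uf th) uw_inj s). Qed.

Lemma outcome_firm_optimal th s (mu : matching m n) : acc_stable (uf th) uw s mu ->
  forall i, firm_util (uf th) mu i <= firm_util (uf th) (outcome uf uw s th) i.
Proof. exact: (DA_firm_optimal (uf_gt0 th) (@uf_inj th) uw_inj). Qed.

Lemma exp_util_le s s' j :
  (forall th, worker_util uw (outcome uf uw s th) j <= worker_util uw (outcome uf uw s' th) j) ->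
  exp_util uf uw Psi s j <= exp_util uf uw Psi s' j.
Proof.
by move=> le_j; apply: ler_sum => th _; exact: ler_wpM2l (ltW (Psi_gt0 th)) _ _ (le_j th).
Qed.

Lemma exp_util_lt s s' j th :
  (forall th, worker_util uw (outcome uf uw s th) j <= worker_util uw (outcome uf uw s' th) j) ->
  worker_util uw (outcome uf uw s th) j < worker_util uw (outcome uf uw s' th) j ->
  exp_util uf uw Psi s j < exp_util uf uw Psi s' j.
Proof. exact: ltr_weighted_sum. Qed.

Lemma BNE_nonblocking s th f w : BNE uf uw Psi s ->
  (forall th', worker_util uw (outcome uf uw s th') w <=
               worker_util uw (outcome uf uw (deviate s w (f |: s w)) th') w) ->
  ~ blocking (uf th) uw (outcome uf uw s th) f w.
Proof.
move=> bne no_harm blocks; have := bne w (f |: s w); rewrite leNgt => /negP; apply.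
apply: exp_util_lt no_harm _.
exact: deviate_gain (outcome_acc_stable _ _) (@outcome_firm_optimal th s) blocks.
Qed.

Lemma truthful_BNE :
  (forall th, ~ pref_cycle (uf th) uw \/ exists sf sw, SPC_with (uf th) uw sf sw) ->
  BNE uf uw Psi (fun=> setT).
Proof.
move=> cases j A; apply: exp_util_le => th.
apply: (truthful_best (uf_gt0 th) uw_gt0 (@uf_inj th) uw_inj (cases th) _
          (outcome_acc_stable _ _) (outcome_acc_stable _ _)).
by move=> j' neq_j; rewrite deviate_other.
Qed.

Lemma acyclic_BNE_stable s : no_pref_cycle uf uw -> BNE uf uw Psi s ->
  forall th, stable (uf th) uw (outcome uf uw s th).
Proof.
move=> acyclic bne th.
apply: (acc_stable_stable (uf_gt0 th) uw_gt0 (outcome_acc_stable th s)) => f w _.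
apply: BNE_nonblocking bne _ => th'.
exact: (deviate_acyclic_no_harm (uf_gt0 th') uw_gt0 (@uf_inj th') uw_inj
          (outcome_acc_stable _ _) (outcome_acc_stable _ _) (acyclic th')).
Qed.

Lemma BNE_diag_matched s (sf : Theta -> {perm 'I_m}) (sw : Theta -> {perm 'I_n}) :
  (forall th, SPC_with (uf th) uw (sf th) (sw th)) ->
  (forall th (p : 'I_m) (q : 'I_n) (f : 'I_m), val p = val q ->
     uw (sf th p) (sw th q) < uw f (sw th q) ->
     forall th', exists p' : 'I_m, (val p' < val p)%N /\ f = sf th' p') ->
  BNE uf uw Psi s -> forall t th, diag_matched (sf th) (sw th) (outcome uf uw s th) t.
Proof.
move=> spc star bne; elim=> [//|t IH] th p q pq.
rewrite ltnS leq_eqVlt => /predU1P[eq_pt|]; last exact: IH.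
have [//|unmatched] := eqVneq (outcome uf uw s th (sw th q)) (Some (sf th p)).
have [M _ _] := outcome_acc_stable th s.
have diag_p : diag_matched (sf th) (sw th) (outcome uf uw s th) (val p) by rewrite eq_pt.
have blocks := diag_blocking (uf_gt0 th) uw_gt0 (spc th) M pq diag_p unmatched.
exfalso; apply: (BNE_nonblocking bne _ blocks) => th'.
apply: (spc_deviate_no_harm (uf_gt0 th') uw_gt0 (@uf_inj th') (spc th')
          (outcome_acc_stable _ _) (outcome_acc_stable _ _) (@outcome_firm_optimal th' s)
          _ (IH th')).
  by rewrite -eq_pt pq; apply/ltnW/ltn_ord.
by rewrite -eq_pt => g /(star _ _ _ _ pq)/(_ th').
Qed.

Lemma SPC_star_BNE_stable s : unique_stable uf uw -> SPC_star uf uw -> BNE uf uw Psi s ->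
  forall th, stable (uf th) uw (outcome uf uw s th).
Proof.
move=> unique [sf [sw [spc star]]] bne th; have [mu [mu_stable _]] := unique th.
suff -> : outcome uf uw s th = mu by [].
have [M _ _] := outcome_acc_stable th s; have [M' _ _] := mu_stable.
apply: (diag_matched_eq M M' (BNE_diag_matched spc star bne (t := m) th)).
apply: (acc_stable_diag_matched (uf_gt0 th) uw_gt0 (spc th) (stable_acc_stable mu_stable)).
by move=> *; rewrite inE.
Qed.

End Economy.

Theorem proposition2 (R : realFieldType) (m n : nat) (Theta : finType)
    (uf : Theta -> 'I_m -> 'I_n -> R) (uw : 'I_m -> 'I_n -> R)
    (Psi : Theta -> R) :
  economy uf uw Psi ->
  unique_stable uf uw ->
  no_pref_cycle uf uw \/ SPC_star uf uw ->
  (exists s : profile m n, BNE uf uw Psi s) /\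
  (forall s : profile m n, BNE uf uw Psi s ->
     forall th, stable (uf th) uw (outcome uf uw s th)).
Proof.
move=> [[Psi_gt0 _] uf_inj uw_inj uf_gt0 uw_gt0] unique cases; split.
  exists (fun=> setT); apply: (truthful_BNE Psi_gt0 uf_gt0 uw_gt0 uf_inj uw_inj) => th.
  case: cases => [acyclic|[sf [sw [spc _]]]]; first by left; apply: acyclic.
  by right; exists (sf th), (sw th); apply: spc.
case: cases => [acyclic|spc_star] s bne.
  exact: (acyclic_BNE_stable Psi_gt0 uf_gt0 uw_gt0 uf_inj uw_inj acyclic bne).
exact: (SPC_star_BNE_stable Psi_gt0 uf_gt0 uw_gt0 uf_inj uw_inj unique spc_star bne).
Qed.
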